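(* Fix $\zeta\in\mathbb{R}$ and $\omega\in\mathbb{C}$ with $0<\operatorname{Im}\omega<1/2$, and for $-1/2<\operatorname{Im} t<0$ let $$f(t) = - \frac{\operatorname{Li}_{2}(-e^{2\pi \zeta})+\operatorname{Li}_{2}(-e^{2\pi (t-\zeta)})-\operatorname{Li}_{2}(-e^{2\pi (t + \frac{i}{2})})}{2 \pi i} + i \pi \zeta^2 +2 i \pi t \omega +\pi t+\frac{i \pi }{6},\qquad g(t) = e^{\pi t-\frac{1}{2} \ln \left(1-e^{2 \pi t}\right)}.$$ Writing $t=t_1+it_2$, there are constants $C>0$ and $c>0$ such that $$\big|e^{f(t)/b^2} g(t)\big| \leq C e^{-\frac{c}{b^2}|t_1|}$$ for all sufficiently large $|t_1|$, all $t_2\in(-1/2,0)$, and all sufficiently small $b>0$.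
   Context: Principal branches: $\operatorname{Im}\ln z\in(-\pi,\pi]$ and $\operatorname{Li}_2(z)=-\int_0^z\frac{\ln(1-u)}{u}du$ for $z\in\mathbb{C}\setminus[1,\infty)$. *)

From Stdlib Require Import Reals Lra.
From Coquelicot Require Import Coquelicot.
Open Scope R_scope.

Definition Cexp (z : C) : C :=
  (exp (Re z) * cos (Im z), exp (Re z) * sin (Im z)).

(* principal argument, values in (-PI, PI]:
   off the closed negative real axis, Arg z = 2 atan (y / (|z| + x));
   on the negative real axis, Arg z = PI; Arg 0 = 0 (irrelevant). *)
Definition Carg (z : C) : R :=
  if Req_EM_T (Im z) 0 then
    (if Rlt_dec (Re z) 0 then PI else 0)
  else 2 * atan (Im z / (Cmod z + Re z)).

Definition Clog (z : C) : C := (ln (Cmod z), Carg z).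

(* Dilogarithm Li_2(z) = - int_0^z ln(1-u)/u du along the segment [0,z]
   (the cut plane C \ [1,oo) is star-shaped w.r.t. 0); with u = s z,
   Li_2(z) = - int_0^1 Log(1 - s z) / s ds, integral taken componentwise. *)
Definition Li2_integrand (z : C) (s : R) : C :=
  Cdiv (Clog (Cminus 1 (Cmult (RtoC s) z))) (RtoC s).

Definition Li2 (z : C) : C :=
  Copp (RInt (fun s => Re (Li2_integrand z s)) 0 1,
        RInt (fun s => Im (Li2_integrand z s)) 0 1).

Definition f_lem (zeta : R) (omega t : C) : C :=
  let tpi := RtoC (2 * PI) in
  Cplus (Copp (Cdiv
     (Cminus (Cplus (Li2 (Copp (Cexp (Cmult tpi (RtoC zeta)))))
                    (Li2 (Copp (Cexp (Cmult tpi (Cminus t (RtoC zeta)))))))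
             (Li2 (Copp (Cexp (Cmult tpi (Cplus t (Cmult Ci (RtoC (1/2)))))))))
     (Cmult tpi Ci)))
  (Cplus (Cmult (Cmult Ci (RtoC PI)) (RtoC (zeta ^ 2)))
  (Cplus (Cmult (Cmult (Cmult (RtoC 2) Ci) (RtoC PI)) (Cmult t omega))
  (Cplus (Cmult (RtoC PI) t)
         (Cdiv (Cmult Ci (RtoC PI)) (RtoC 6))))).

Definition g_lem (t : C) : C :=
  Cexp (Cminus (Cmult (RtoC PI) t)
               (Cmult (RtoC (1/2)) (Clog (Cminus 1 (Cexp (Cmult (RtoC (2 * PI)) t)))))).

(* |e^{f/b^2} g| = e^{Re f / b^2} |g|, and |g| <= 2 as soon as |t1| >= 1.  Since
   Im Li2(-w) = - ∫_0^1 Arg(1 + s w) ds / s, comparing Arg(1 + u e^{iφ}) with φ u / (1 + u)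
   (the error is O(min(u, 1/u))) gives Im Li2(-R e^{iφ}) = - φ ln(1 + R) + O(1) uniformly in R
   and in φ ∈ (-π, π).  The two t-dependent dilogarithms have angles 2π t2 and 2π t2 + π, so
   Re f <= - ln(1 + e^{2π t1}) / 2 + π t1 - 2π t1 Im ω + O(1), i.e. Re f decays linearly with
   slope 2π Im ω as t1 -> +oo and π (1 - 2 Im ω) as t1 -> -oo; half the smaller slope then
   absorbs the O(1) term for large |t1|. *)

From Stdlib Require Import Reals Lra.
From Coquelicot Require Import Coquelicot.
Open Scope R_scope.

Lemma atan_le_id (y : R) : 0 <= y -> atan y <= y.
Proof.
  intros Hy. destruct (Req_dec y 0) as [->|Hne]; [rewrite atan_0; lra|].
  destruct (MVT_cor1 atan 0 y (fun x => derivable_pt_atan x)) as [c [Ec _]]; [lra|].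
  rewrite derive_pt_atan, atan_0 in Ec.
  assert (Hc2 : 0 < 1 + c²) by (unfold Rsqr; nra).
  assert (1 / (1 + c²) <= 1).
  { unfold Rdiv. rewrite Rmult_1_l, <- Rinv_1.
    apply Rinv_le_contravar; [lra|]. unfold Rsqr; nra. }
  assert (0 < 1 / (1 + c²)) by (apply Rdiv_lt_0_compat; lra).
  nra.
Qed.

Lemma Rabs_atan_le (y : R) : Rabs (atan y) <= Rabs y.
Proof.
  assert (Hpos : forall z, 0 <= z -> Rabs (atan z) <= Rabs z).
  { intros z Hz. assert (0 <= atan z).
    { destruct (Req_dec z 0) as [->|]; [rewrite atan_0; lra|].
      left. rewrite <- atan_0. apply atan_increasing. lra. }
    rewrite !Rabs_pos_eq by lra. now apply atan_le_id. }
  destruct (Rle_or_lt 0 y) as [Hy|Hy]; [now apply Hpos|].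
  rewrite <- (Rabs_Ropp y), <- (Rabs_Ropp (atan y)), <- atan_opp. apply Hpos. lra.
Qed.

Lemma exp_le_compat (x y : R) : x <= y -> exp x <= exp y.
Proof. intros [Hlt | ->]; [left; now apply exp_increasing|lra]. Qed.

Lemma Rabs_ln_1_plus_scale (x k : R) : 0 < x -> 0 < k ->
  Rabs (ln (1 + k * x) - ln (1 + x)) <= Rabs (ln k).
Proof.
  intros Hx Hk. destruct (Rle_or_lt 1 k) as [H1|H1].
  - assert (0 <= ln k) by (rewrite <- ln_1; apply ln_le; lra).
    assert (ln (1 + x) <= ln (1 + k * x)) by (apply ln_le; nra).
    assert (ln (1 + k * x) <= ln k + ln (1 + x)).
    { rewrite <- ln_mult by lra. apply ln_le; nra. }
    rewrite (Rabs_pos_eq (ln k)) by lra. apply Rabs_le; lra.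
  - assert (ln k < 0) by (rewrite <- ln_1; apply ln_increasing; lra).
    assert (ln (1 + k * x) <= ln (1 + x)) by (apply ln_le; nra).
    assert (ln k + ln (1 + x) <= ln (1 + k * x)).
    { rewrite <- ln_mult by lra. apply ln_le; nra. }
    rewrite (Rabs_left (ln k)) by lra. apply Rabs_le; lra.
Qed.

Lemma sin_mul_pos (φ : R) : -PI < φ < PI -> sin φ <> 0 -> 0 < φ * sin φ.
Proof.
  intros Hφ Hs. destruct (Rtotal_order φ 0) as [Hn|[->|Hp]].
  - pose proof (sin_lt_0_var φ ltac:(lra) ltac:(lra)). nra.
  - rewrite sin_0 in Hs. lra.
  - pose proof (sin_gt_0 φ ltac:(lra) ltac:(lra)). nra.
Qed.

Section Carg_off_real_axis.

Variables x y : R.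
Hypothesis y_neq0 : y <> 0.

Lemma Cmod_sqr_pair : Cmod (x, y) * Cmod (x, y) = x ^ 2 + y ^ 2.
Proof. apply sqrt_sqrt. nra. Qed.

Lemma Cmod_add_Re_pos : 0 < Cmod (x, y) + x.
Proof.
  pose proof Cmod_sqr_pair. pose proof (Cmod_ge_0 (x, y)).
  assert (0 < y * y) by (destruct (Rlt_or_le 0 y); [nra|assert (y < 0) by lra; nra]).
  nra.
Qed.

Lemma Carg_atan : Carg (x, y) = 2 * atan (y / (Cmod (x, y) + x)).
Proof. unfold Carg; simpl. now destruct (Req_EM_T y 0). Qed.

Lemma Carg_bound : -PI < Carg (x, y) < PI.
Proof. rewrite Carg_atan. pose proof (atan_bound (y / (Cmod (x, y) + x))). lra. Qed.

Lemma Carg_mul_pos : 0 < y * Carg (x, y).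
Proof.
  rewrite Carg_atan. pose proof Cmod_add_Re_pos.
  destruct (Rlt_or_le 0 y) as [Hy|Hy].
  - assert (0 < y / (Cmod (x, y) + x)) by (apply Rdiv_lt_0_compat; lra).
    pose proof (atan_increasing 0 _ H0). rewrite atan_0 in *. nra.
  - assert (y / (Cmod (x, y) + x) < 0).
    { unfold Rdiv. apply Rmult_neg_pos; [lra|]. now apply Rinv_0_lt_compat. }
    pose proof (atan_increasing _ 0 H0). rewrite atan_0 in *. nra.
Qed.

(* With [Carg = 2 atan k], cos and sin of the argument are rational in [k]. *)
Lemma Carg_polar :
  cos (Carg (x, y)) * Cmod (x, y) = x /\ sin (Carg (x, y)) * Cmod (x, y) = y.
Proof.
  pose proof Cmod_sqr_pair as Hm2. pose proof Cmod_add_Re_pos as Hmx.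
  rewrite Carg_atan. set (m := Cmod (x, y)) in *. set (k := y / (m + x)).
  assert (Hk : 0 < 1 + k²) by (unfold Rsqr; nra).
  assert (Hs : sqrt (1 + k²) * sqrt (1 + k²) = 1 + k²) by (apply sqrt_sqrt; lra).
  assert (Hsp : 0 < sqrt (1 + k²)) by (apply sqrt_lt_R0; lra).
  assert (Hcos : cos (2 * atan k) = (1 - k ^ 2) / (1 + k ^ 2)).
  { rewrite cos_2a_cos, cos_atan. set (S := sqrt (1 + k²)) in *. unfold Rsqr in *.
    replace (2 * (1 / S) * (1 / S)) with (2 / (S * S)) by (field; lra).
    rewrite Hs. field. lra. }
  assert (Hsin : sin (2 * atan k) = 2 * k / (1 + k ^ 2)).
  { rewrite sin_2a, sin_atan, cos_atan. set (S := sqrt (1 + k²)) in *. unfold Rsqr in *.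
    replace (2 * (k / S) * (1 / S)) with (2 * k / (S * S)) by (field; lra).
    rewrite Hs. field. lra. }
  assert (E1 : (m + x) ^ 2 + y ^ 2 = 2 * m * (m + x)) by nra.
  assert (E2 : (m + x) ^ 2 - y ^ 2 = 2 * x * (m + x)) by nra.
  assert (Hm : 0 < m) by (pose proof (Cmod_ge_0 (x, y)); fold m in H; nra).
  rewrite Hcos, Hsin. unfold k. split.
  - replace ((1 - (y / (m + x)) ^ 2) / (1 + (y / (m + x)) ^ 2))
      with (((m + x) ^ 2 - y ^ 2) / ((m + x) ^ 2 + y ^ 2)) by (field; nra).
    rewrite E1, E2. field. split; lra.
  - replace (2 * (y / (m + x)) / (1 + (y / (m + x)) ^ 2))
      with (2 * y * (m + x) / ((m + x) ^ 2 + y ^ 2)) by (field; nra).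
    rewrite E1. field. split; lra.
Qed.

End Carg_off_real_axis.

Section Carg_1_plus_polar.

Variables u φ : R.
Hypothesis u_pos : 0 < u.
Hypothesis φ_bound : -PI < φ < PI.
Hypothesis sin_φ_neq0 : sin φ <> 0.

Let y_neq0 : u * sin φ <> 0.
Proof. intro H. apply Rmult_integral in H. lra. Qed.

Lemma Carg_1_plus_small : u <= 1/2 -> Rabs (Carg (1 + u * cos φ, u * sin φ)) <= 2 * u.
Proof.
  intros Hu. rewrite Carg_atan by exact y_neq0.
  pose proof (COS_bound φ). pose proof (SIN_bound φ).
  pose proof (Cmod_sqr_pair (1 + u * cos φ) (u * sin φ)).
  pose proof (Cmod_ge_0 (1 + u * cos φ, u * sin φ)).
  set (m := Cmod (1 + u * cos φ, u * sin φ)) in *.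
  assert (Hden : 1 <= m + (1 + u * cos φ)) by nra.
  assert (Hnum : Rabs (u * sin φ) <= u).
  { rewrite Rabs_mult, Rabs_pos_eq by lra.
    assert (Rabs (sin φ) <= 1) by (apply Rabs_le; lra). nra. }
  rewrite Rabs_mult, (Rabs_pos_eq 2) by lra. apply Rmult_le_compat_l; [lra|].
  eapply Rle_trans; [apply Rabs_atan_le|].
  unfold Rdiv. rewrite Rabs_mult, Rabs_inv, (Rabs_pos_eq (m + _)) by lra.
  apply Rle_trans with (Rabs (u * sin φ) * 1); [|lra].
  apply Rmult_le_compat_l; [apply Rabs_pos|].
  rewrite <- Rinv_1. apply Rinv_le_contravar; lra.
Qed.

(* [d := Arg(1 + u e^{iφ}) - φ] is the argument of [e^{-iφ} + u], a point of the right half-plane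
   at distance at least [u - 1] from the origin. *)
Lemma Carg_1_plus_large : 2 < u -> Rabs (Carg (1 + u * cos φ, u * sin φ) - φ) <= 2 / u.
Proof.
  intros Hu.
  pose proof (Carg_polar (1 + u * cos φ) _ y_neq0) as [Hcos Hsin].
  pose proof (Carg_bound (1 + u * cos φ) _ y_neq0) as HG.
  pose proof (Carg_mul_pos (1 + u * cos φ) _ y_neq0) as HGsign.
  pose proof (sin_mul_pos φ φ_bound sin_φ_neq0) as Hφsign.
  pose proof (Cmod_ge_0 (1 + u * cos φ, u * sin φ)).
  set (m := Cmod (1 + u * cos φ, u * sin φ)) in *.
  set (G := Carg (1 + u * cos φ, u * sin φ)) in *.
  pose proof (COS_bound φ). pose proof (SIN_bound φ).
  set (c := cos φ) in *. set (s := sin φ) in *.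
  assert (Hcs : s * s + c * c = 1) by (pose proof (sin2_cos2 φ); unfold Rsqr in *; auto).
  set (d := G - φ).
  assert (Hcd : cos d * m = c + u).
  { unfold d. rewrite cos_minus. fold c s.
    replace ((cos G * c + sin G * s) * m) with ((cos G * m) * c + (sin G * m) * s) by ring.
    rewrite Hcos, Hsin. nra. }
  assert (Hsd : sin d * m = - s).
  { unfold d. rewrite sin_minus. fold c s.
    replace ((sin G * c - cos G * s) * m) with ((sin G * m) * c - (cos G * m) * s) by ring.
    rewrite Hcos, Hsin. nra. }
  assert (Hcd_pos : 0 < cos d) by (destruct (Rle_or_lt (cos d) 0); nra).
  assert (Hd : -PI < d < PI).
  { unfold d. destruct (Rlt_or_le 0 s); [|assert (s < 0) by (fold s in sin_φ_neq0; lra)];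
      split; nra. }
  assert (Hd2 : -(PI/2) < d < PI/2).
  { split.
    - destruct (Rle_or_lt d (-(PI/2))) as [Hle|]; auto.
      pose proof (cos_le_0 (-d) ltac:(lra) ltac:(lra)). rewrite cos_neg in *. lra.
    - destruct (Rlt_or_le d (PI/2)) as [|Hle]; auto.
      pose proof (cos_le_0 d ltac:(lra) ltac:(lra)). lra. }
  assert (Htan : tan d = - s / (c + u)).
  { unfold tan. apply (Rmult_eq_reg_r (cos d * (c + u))); [|nra].
    field_simplify; [|lra|lra].
    replace (sin d * c + sin d * u) with (sin d * (c + u)) by ring. rewrite <- Hcd.
    replace (- cos d * s) with (cos d * (- s)) by ring. rewrite <- Hsd. ring. }
  rewrite <- (atan_tan d Hd2). eapply Rle_trans; [apply Rabs_atan_le|].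
  rewrite Htan. unfold Rdiv at 1.
  rewrite Rabs_mult, Rabs_Ropp, Rabs_inv, (Rabs_pos_eq (c + u)) by lra.
  assert (Rabs s <= 1) by (apply Rabs_le; lra).
  apply Rle_trans with (1 * / (c + u)).
  - apply Rmult_le_compat_r; [left; apply Rinv_0_lt_compat|]; lra.
  - apply (Rmult_le_reg_r (u * (c + u))); [nra|]. field_simplify; nra.
Qed.

(* [φ u / (1 + u)] has the same limits [0] and [φ] as the argument, and [∫_0^R φ du / (1 + u)]
   is exactly [φ ln (1 + R)]. *)
Lemma Carg_1_plus_approx :
  Rabs (Carg (1 + u * cos φ, u * sin φ) - φ * u / (1 + u)) <= 20 * u / (1 + u ^ 2).
Proof.
  pose proof PI_4. pose proof PI_RGT_0.
  assert (Hpos2 : 0 < 1 + u ^ 2) by nra.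
  assert (Hphi : Rabs (φ * u / (1 + u)) <= PI * u / (1 + u)).
  { unfold Rdiv. rewrite !Rabs_mult, (Rabs_pos_eq u), (Rabs_pos_eq (/ (1 + u)))
      by (try apply Rlt_le, Rinv_0_lt_compat; lra).
    apply Rmult_le_compat_r; [left; apply Rinv_0_lt_compat; lra|].
    apply Rmult_le_compat_r; [lra|]. apply Rabs_le; lra. }
  destruct (Rle_or_lt u (1/2)) as [Hsmall|Hbig]; [|destruct (Rle_or_lt u 2) as [Hmid|Hlarge]].
  - pose proof (Carg_1_plus_small Hsmall).
    eapply Rle_trans; [apply Rabs_triang|]. rewrite Rabs_Ropp.
    assert (PI * u / (1 + u) <= 4 * u).
    { apply (Rmult_le_reg_r (1 + u)); [lra|]. field_simplify; nra. }
    assert (16 * u <= 20 * u / (1 + u ^ 2)).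
    { apply (Rmult_le_reg_r (1 + u ^ 2)); [lra|]. field_simplify; nra. }
    lra.
  - pose proof (Carg_bound (1 + u * cos φ) _ y_neq0).
    eapply Rle_trans; [apply Rabs_triang|]. rewrite Rabs_Ropp.
    assert (Rabs (Carg (1 + u * cos φ, u * sin φ)) <= PI) by (apply Rabs_le; lra).
    assert (PI * u / (1 + u) <= PI).
    { apply (Rmult_le_reg_r (1 + u)); [lra|]. field_simplify; nra. }
    assert (8 <= 20 * u / (1 + u ^ 2)).
    { apply (Rmult_le_reg_r (1 + u ^ 2)); [lra|]. field_simplify; nra. }
    lra.
  - pose proof (Carg_1_plus_large Hlarge).
    replace (Carg (1 + u * cos φ, u * sin φ) - φ * u / (1 + u))
      with ((Carg (1 + u * cos φ, u * sin φ) - φ) + φ / (1 + u)) by (field; lra).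
    eapply Rle_trans; [apply Rabs_triang|].
    assert (Rabs (φ / (1 + u)) <= 4 / u).
    { unfold Rdiv. rewrite Rabs_mult, Rabs_inv, (Rabs_pos_eq (1 + u)) by lra.
      assert (Rabs φ <= 4) by (apply Rabs_le; lra).
      apply Rle_trans with (4 * / (1 + u)).
      - apply Rmult_le_compat_r; [left; apply Rinv_0_lt_compat|]; lra.
      - apply Rmult_le_compat_l; [lra|]. apply Rinv_le_contravar; lra. }
    assert (6 / u <= 20 * u / (1 + u ^ 2)).
    { apply (Rmult_le_reg_r (u * (1 + u ^ 2))); [nra|]. field_simplify; nra. }
    assert (2 / u + 4 / u = 6 / u) by (field; lra).
    lra.
Qed.

End Carg_1_plus_polar.

(* [Carg (1 + s p, s q)] as a smooth function of [s]: for [q <> 0] the half-angle formula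
   never leaves its domain, also at [s = 0] where the point [1] lies on the real axis. *)
Definition arg_line (p q s : R) : R :=
  2 * atan (s * q / (sqrt ((1 + s * p) ^ 2 + (s * q) ^ 2) + (1 + s * p))).

(* The integrand [Carg (1 + s p, s q) / s] of [Im Li2], made continuous at [s = 0]. *)
Definition arg_line_slope (p q s : R) : R :=
  if Req_EM_T s 0 then q else arg_line p q s / s.

Section Arg_line.

Variables p q : R.
Hypothesis q_neq0 : q <> 0.

Lemma arg_line_den_pos (s : R) :
  0 < (1 + s * p) ^ 2 + (s * q) ^ 2 /\ 0 < sqrt ((1 + s * p) ^ 2 + (s * q) ^ 2) + (1 + s * p).
Proof.
  destruct (Req_dec s 0) as [->|Hs].
  - replace ((1 + 0 * p) ^ 2 + (0 * q) ^ 2) with 1 by ring. rewrite sqrt_1. lra.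
  - assert (Hy : s * q <> 0) by (intro H; apply Rmult_integral in H; tauto).
    split; [|exact (Cmod_add_Re_pos _ _ Hy)].
    assert (0 < (s * q) * (s * q))
      by (destruct (Rlt_or_le 0 (s * q)); [nra|assert (s * q < 0) by lra; nra]).
    pose proof (pow2_ge_0 (1 + s * p)). simpl. lra.
Qed.

Lemma Carg_arg_line (s : R) : s <> 0 -> Carg (1 + s * p, s * q) = arg_line p q s.
Proof.
  intros Hs. apply Carg_atan. intro H. apply Rmult_integral in H. tauto.
Qed.

Lemma ex_derive_arg_line (s : R) : ex_derive (arg_line p q) s.
Proof.
  destruct (arg_line_den_pos s) as [H1 H2]. unfold arg_line.
  auto_derive. simpl in H1, H2. repeat split; lra.
Qed.

Lemma is_derive_arg_line_0 : is_derive (arg_line p q) 0 q.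
Proof.
  destruct (arg_line_den_pos 0) as [H1 H2]. unfold arg_line.
  auto_derive; simpl in H1, H2; [repeat split; lra|].
  replace ((1 + 0 * p) * ((1 + 0 * p) * 1) + 0 * q * (0 * q * 1)) with 1 by ring.
  rewrite sqrt_1. field_simplify; lra.
Qed.

(* At [0], continuity of the slope is differentiability of [arg_line] (which vanishes there). *)
Lemma continuous_arg_line_slope (s : R) : continuous (arg_line_slope p q) s.
Proof.
  destruct (Req_EM_T s 0) as [->|Hs].
  - apply continuity_pt_filterlim.
    pose proof (proj1 (is_derive_Reals _ _ _) is_derive_arg_line_0) as D.
    intros eps Heps. destruct (D eps Heps) as [del Hdel].
    exists del. split; [apply cond_pos|].
    intros x [[_ Hx0] Hxd]. change R in x. simpl in Hxd. unfold R_dist in *. simpl.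
    unfold arg_line_slope. destruct (Req_EM_T x 0) as [E|_]; [congruence|].
    destruct (Req_EM_T 0 0) as [_|E]; [|congruence].
    specialize (Hdel x (not_eq_sym Hx0) ltac:(rewrite Rminus_0_r in Hxd; exact Hxd)).
    replace (0 + x) with x in Hdel by ring.
    replace (arg_line p q 0) with 0 in Hdel
      by (unfold arg_line; rewrite Rmult_0_l, Rdiv_0_l, atan_0; ring).
    rewrite Rminus_0_r in Hdel. exact Hdel.
  - apply (continuous_ext_loc _ (fun y => arg_line p q y / y)).
    + assert (Hp : 0 < Rabs s) by (apply Rabs_pos_lt; exact Hs).
      exists (mkposreal _ Hp). intros y Hy. unfold arg_line_slope.
      destruct (Req_EM_T y 0) as [->|]; [|reflexivity].
      exfalso. cbv [ball] in Hy. simpl in Hy.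
      unfold AbsRing_ball, abs, minus, plus, opp in Hy. simpl in Hy.
      rewrite Rplus_0_l, Rabs_Ropp in Hy. lra.
    + apply (@ex_derive_continuous R_AbsRing R_NormedModule).
      apply ex_derive_div; [apply ex_derive_arg_line|apply ex_derive_id|exact Hs].
Qed.

End Arg_line.

Lemma is_RInt_log_comparison (r φ : R) : 0 < r ->
  is_RInt (fun s => φ * r / (1 + s * r)) 0 1 (φ * ln (1 + r)).
Proof.
  intros HR.
  replace (φ * ln (1 + r)) with (minus (φ * ln (1 + 1 * r)) (φ * ln (1 + 0 * r)))
    by (unfold minus, plus, opp; simpl; rewrite Rmult_0_l, Rplus_0_r, ln_1, Rmult_1_l; ring).
  apply (is_RInt_derive (fun s => φ * ln (1 + s * r))); intros x Hx;
    rewrite Rmin_left, Rmax_right in Hx by lra.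
  - auto_derive; [nra|]. field. nra.
  - apply (@ex_derive_continuous R_AbsRing R_NormedModule). auto_derive. nra.
Qed.

Lemma is_RInt_atan_comparison (r : R) :
  is_RInt (fun s => 20 * r / (1 + (s * r) ^ 2)) 0 1 (20 * atan r).
Proof.
  replace (20 * atan r) with (minus (20 * atan (1 * r)) (20 * atan (0 * r)))
    by (unfold minus, plus, opp; simpl; rewrite Rmult_0_l, atan_0, Rmult_1_l; ring).
  apply (is_RInt_derive (fun s => 20 * atan (s * r))); intros x Hx.
  - auto_derive; [auto|]. unfold Rsqr. field. nra.
  - apply (@ex_derive_continuous R_AbsRing R_NormedModule). auto_derive. nra.
Qed.

Section Integral_of_arg.

Variables r φ : R.
Hypothesis r_pos : 0 < r.
Hypothesis φ_bound : -PI < φ < PI.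
Hypothesis sin_φ_neq0 : sin φ <> 0.

Let q_neq0 : r * sin φ <> 0.
Proof. intro H. apply Rmult_integral in H. lra. Qed.

Lemma arg_line_slope_approx (s : R) : 0 <= s <= 1 ->
  Rabs (arg_line_slope (r * cos φ) (r * sin φ) s - φ * r / (1 + s * r))
    <= 20 * r / (1 + (s * r) ^ 2).
Proof.
  intros Hs. unfold arg_line_slope. destruct (Req_EM_T s 0) as [->|Hs0].
  - pose proof PI_4. pose proof (SIN_bound φ).
    replace (r * sin φ - φ * r / (1 + 0 * r)) with (r * (sin φ - φ)) by (field; lra).
    replace (20 * r / (1 + (0 * r) ^ 2)) with (r * 20) by (field; lra).
    rewrite Rabs_mult, Rabs_pos_eq by lra. apply Rmult_le_compat_l; [lra|].
    apply Rabs_le; lra.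
  - assert (Hu : 0 < s * r) by nra.
    pose proof (Carg_1_plus_approx (s * r) φ Hu φ_bound sin_φ_neq0) as P.
    rewrite <- Carg_arg_line by (auto || lra).
    replace (1 + s * r * cos φ, s * r * sin φ) with (1 + s * (r * cos φ), s * (r * sin φ))
      in P by (f_equal; ring).
    set (G := Carg _) in *.
    replace (G / s - φ * r / (1 + s * r)) with ((G - φ * (s * r) / (1 + s * r)) / s)
      by (field; lra).
    replace (20 * r / (1 + (s * r) ^ 2)) with (20 * (s * r) / (1 + (s * r) ^ 2) / s)
      by (field; nra).
    unfold Rdiv at 1 3. rewrite Rabs_mult, Rabs_inv, (Rabs_pos_eq s) by lra.
    apply Rmult_le_compat_r; [left; apply Rinv_0_lt_compat; lra|exact P].
Qed.

Lemma RInt_arg_approx :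
  Rabs (RInt (fun s => Carg (1 + s * (r * cos φ), s * (r * sin φ)) / s) 0 1
        - φ * ln (1 + r)) <= 10 * PI.
Proof.
  set (p := r * cos φ). set (q := r * sin φ).
  assert (Hint : ex_RInt (arg_line_slope p q) 0 1)
    by (apply (ex_RInt_continuous (V := R_CompleteNormedModule)); intros;
        now apply continuous_arg_line_slope).
  rewrite (RInt_ext _ (arg_line_slope p q)).
  2:{ rewrite Rmin_left, Rmax_right by lra. intros s Hs. unfold arg_line_slope.
      destruct (Req_EM_T s 0) as [E|_]; [lra|]. now rewrite Carg_arg_line by (exact q_neq0 || lra). }
  destruct Hint as [I HI]. rewrite (is_RInt_unique _ _ _ _ HI).
  assert (Hdiff := is_RInt_minus _ _ _ _ _ _ HI (is_RInt_log_comparison r φ r_pos)).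
  assert (Hle : norm (minus I (φ * ln (1 + r))) <= 20 * atan r).
  { apply (norm_RInt_le _ _ 0 1 _ _ ltac:(lra)) with (2 := Hdiff)
      (3 := is_RInt_atan_comparison r).
    exact arg_line_slope_approx. }
  change (Rabs (I - φ * ln (1 + r)) <= 20 * atan r) in Hle.
  pose proof (atan_bound r).
  assert (0 < atan r) by (rewrite <- atan_0; apply atan_increasing; lra).
  lra.
Qed.

End Integral_of_arg.

Lemma Im_Li2_neg (p q : R) :
  Im (Li2 (Copp (p, q))) = - RInt (fun s => Carg (1 + s * p, s * q) / s) 0 1.
Proof.
  unfold Li2. simpl. f_equal. apply RInt_ext. rewrite Rmin_left, Rmax_right by lra.
  intros s Hs. unfold Li2_integrand.
  replace (Cminus 1 (Cmult (RtoC s) (Copp (p, q)))) with ((1 + s * p, s * q) : C)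
    by (unfold Cminus, Cmult, Copp, Cplus, RtoC; simpl; f_equal; ring).
  unfold Clog, Cdiv, Cmult, Cinv, RtoC. simpl. field. lra.
Qed.

Lemma Im_Li2_neg_real (e : R) : 0 <= e -> Im (Li2 (Copp (e, 0))) = 0.
Proof.
  intros He. rewrite Im_Li2_neg, (RInt_ext _ (fun _ => 0)).
  - rewrite RInt_const. unfold scal; simpl. unfold mult; simpl. ring.
  - rewrite Rmin_left, Rmax_right by lra. intros s Hs.
    rewrite Rmult_0_r. unfold Carg; simpl. destruct (Req_EM_T 0 0) as [_|]; [|congruence].
    destruct (Rlt_dec (1 + s * e) 0); [nra|]. unfold Rdiv; ring.
Qed.

Lemma Im_Li2_neg_polar (r φ : R) : 0 < r -> -PI < φ < PI -> sin φ <> 0 ->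
  Rabs (Im (Li2 (Copp (r * cos φ, r * sin φ))) + φ * ln (1 + r)) <= 10 * PI.
Proof.
  intros Hr Hφ Hs. rewrite Im_Li2_neg.
  replace (- RInt _ 0 1 + φ * ln (1 + r))
    with (- (RInt (fun s => Carg (1 + s * (r * cos φ), s * (r * sin φ)) / s) 0 1
             - φ * ln (1 + r))) by ring.
  rewrite Rabs_Ropp. now apply RInt_arg_approx.
Qed.

Lemma Re_f_lem (zeta w1 w2 t1 t2 : R) :
  Re (f_lem zeta (w1, w2) (t1, t2)) =
  - (Im (Li2 (Copp (exp (2 * PI * zeta), 0)))
     + Im (Li2 (Copp (exp (2 * PI * (t1 - zeta)) * cos (2 * PI * t2),
                      exp (2 * PI * (t1 - zeta)) * sin (2 * PI * t2))))
     - Im (Li2 (Copp (exp (2 * PI * t1) * cos (2 * PI * t2 + PI),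
                      exp (2 * PI * t1) * sin (2 * PI * t2 + PI))))) / (2 * PI)
  - 2 * PI * (t1 * w2 + t2 * w1) + PI * t1.
Proof.
  unfold f_lem.
  replace (Cexp (Cmult (RtoC (2 * PI)) (RtoC zeta))) with ((exp (2 * PI * zeta), 0) : C)
    by (unfold Cexp, Cmult, RtoC; simpl;
        rewrite !Rmult_0_r, Rmult_0_l, Rplus_0_r, Rminus_0_r, cos_0, sin_0; f_equal; ring).
  replace (Cexp (Cmult (RtoC (2 * PI)) (Cminus (t1, t2) (RtoC zeta))))
    with ((exp (2 * PI * (t1 - zeta)) * cos (2 * PI * t2),
           exp (2 * PI * (t1 - zeta)) * sin (2 * PI * t2)) : C)
    by (unfold Cexp, Cmult, Cminus, Cplus, Copp, RtoC; simpl; f_equal; apply f_equal2; apply f_equal; ring).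
  replace (Cexp (Cmult (RtoC (2 * PI)) (Cplus (t1, t2) (Cmult Ci (RtoC (1 / 2))))))
    with ((exp (2 * PI * t1) * cos (2 * PI * t2 + PI),
           exp (2 * PI * t1) * sin (2 * PI * t2 + PI)) : C)
    by (unfold Cexp, Cmult, Cplus, Ci, RtoC; simpl; f_equal; apply f_equal2; apply f_equal; field).
  destruct (Li2 (Copp (exp (2 * PI * zeta), 0))) as [a1 b1].
  destruct (Li2 (Copp (exp (2 * PI * (t1 - zeta)) * cos (2 * PI * t2), _))) as [a2 b2].
  destruct (Li2 (Copp (exp (2 * PI * t1) * cos (2 * PI * t2 + PI), _))) as [a3 b3].
  pose proof PI_RGT_0.
  unfold Cdiv, Cminus, Cplus, Cmult, Copp, Cinv, RtoC, Ci. simpl. field. nra.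
Qed.

(* The [ln (1 + e^{2π t1})] terms of the two non-trivial dilogarithms cancel up to [O(|ζ|)]
   except for the factor [(2π t2 + π) - 2π t2 = π] between their angles. *)
Lemma Re_f_lem_le (zeta w1 w2 t1 t2 : R) : -(1/2) < t2 < 0 ->
  Re (f_lem zeta (w1, w2) (t1, t2)) <=
  - (1/2) * ln (1 + exp (2 * PI * t1)) + PI * t1 - 2 * PI * t1 * w2
  + (PI * Rabs zeta + 10 + PI * Rabs w1).
Proof.
  intros Ht2. pose proof PI_RGT_0 as HPI.
  rewrite Re_f_lem, Im_Li2_neg_real by (left; apply exp_pos).
  assert (Hs1 : sin (2 * PI * t2) <> 0)
    by (pose proof (sin_lt_0_var (2 * PI * t2) ltac:(nra) ltac:(nra)); lra).
  assert (Hs2 : sin (2 * PI * t2 + PI) <> 0)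
    by (pose proof (sin_gt_0 (2 * PI * t2 + PI) ltac:(nra) ltac:(nra)); lra).
  pose proof (Im_Li2_neg_polar _ (2 * PI * t2) (exp_pos (2 * PI * (t1 - zeta)))
    ltac:(split; nra) Hs1) as IB.
  pose proof (Im_Li2_neg_polar _ (2 * PI * t2 + PI) (exp_pos (2 * PI * t1))
    ltac:(split; nra) Hs2) as ID.
  set (lB := ln (1 + exp (2 * PI * (t1 - zeta)))) in *.
  set (lD := ln (1 + exp (2 * PI * t1))) in *.
  set (AB := Im _) in IB |- *. set (AD := Im _) in ID |- *.
  assert (Hdl : Rabs (lB - lD) <= 2 * PI * Rabs zeta).
  { unfold lB, lD.
    replace (exp (2 * PI * (t1 - zeta))) with (exp (- (2 * PI * zeta)) * exp (2 * PI * t1))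
      by (rewrite <- exp_plus; f_equal; ring).
    eapply Rle_trans; [apply Rabs_ln_1_plus_scale; apply exp_pos|].
    rewrite ln_exp, Rabs_Ropp, Rabs_mult, Rabs_pos_eq by lra. lra. }
  assert (Hprod : 2 * PI * t2 * (lB - lD) <= PI * (2 * PI * Rabs zeta)).
  { apply Rle_trans with (Rabs (2 * PI * t2 * (lB - lD))); [apply Rle_abs|].
    rewrite Rabs_mult. apply Rmult_le_compat; auto using Rabs_pos.
    apply Rabs_le; split; nra. }
  assert (Hw : - 2 * PI * t2 * w1 <= PI * Rabs w1).
  { apply Rle_trans with (Rabs (- 2 * PI * t2 * w1)); [apply Rle_abs|].
    rewrite Rabs_mult. apply Rmult_le_compat_r; [apply Rabs_pos|].
    apply Rabs_le; split; nra. }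
  apply Rabs_le_between in IB. apply Rabs_le_between in ID.
  assert (Hsum : (AD - AB) / (2 * PI) <= PI * Rabs zeta - (1/2) * lD + 10).
  { apply (Rmult_le_reg_r (2 * PI)); [lra|].
    replace ((AD - AB) / (2 * PI) * (2 * PI)) with (AD - AB) by (field; lra).
    nra. }
  replace (- (0 + AB - AD) / (2 * PI)) with ((AD - AB) / (2 * PI)) by (field; lra).
  nra.
Qed.

Lemma Re_f_lem_linear_decay (zeta w1 w2 t1 t2 : R) : 0 < w2 < 1/2 -> -(1/2) < t2 < 0 ->
  Re (f_lem zeta (w1, w2) (t1, t2)) <=
  - (PI * Rmin (2 * w2) (1 - 2 * w2)) * Rabs t1 + (PI * Rabs zeta + 10 + PI * Rabs w1).
Proof.
  intros Hw2 Ht2. pose proof PI_RGT_0.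
  pose proof (Re_f_lem_le zeta w1 w2 t1 t2 Ht2).
  pose proof (Rmin_l (2 * w2) (1 - 2 * w2)). pose proof (Rmin_r (2 * w2) (1 - 2 * w2)).
  set (k := Rmin _ _) in *. pose proof (exp_pos (2 * PI * t1)).
  destruct (Rle_or_lt 0 t1) as [Hp|Hn].
  - rewrite Rabs_pos_eq by lra.
    assert (2 * PI * t1 <= ln (1 + exp (2 * PI * t1))).
    { rewrite <- (ln_exp (2 * PI * t1)) at 1. apply ln_le; lra. }
    assert (PI * k * t1 <= PI * (2 * w2) * t1)
      by (apply Rmult_le_compat_r; [|apply Rmult_le_compat_l]; lra).
    lra.
  - rewrite Rabs_left by lra.
    assert (0 <= ln (1 + exp (2 * PI * t1))) by (rewrite <- ln_1; apply ln_le; lra).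
    assert (PI * (1 - 2 * w2) * (- t1) >= PI * k * (- t1))
      by (apply Rle_ge, Rmult_le_compat_r; [|apply Rmult_le_compat_l]; lra).
    lra.
Qed.

Lemma Cmod_Cexp (z : C) : Cmod (Cexp z) = exp (Re z).
Proof.
  destruct z as [a b]. unfold Cmod, Cexp. simpl.
  replace (exp a * cos b * (exp a * cos b * 1) + exp a * sin b * (exp a * sin b * 1))
    with (exp a * exp a) by (pose proof (sin2_cos2 b); unfold Rsqr in *; nra).
  apply sqrt_square. left; apply exp_pos.
Qed.

Lemma Re_div_RtoC (z : C) (x : R) : x <> 0 -> Re (Cdiv z (RtoC x)) = Re z / x.
Proof. intros Hx. destruct z as [a b]. unfold Cdiv, Cmult, Cinv, RtoC; simpl. field. auto. Qed.

Lemma Rabs_1_minus_le_Cmod (e θ : R) : 0 <= e ->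
  Rabs (1 - e) <= Cmod (Cminus 1 (e * cos θ, e * sin θ)).
Proof.
  intros He. unfold Cmod, Cminus, Cplus, Copp, RtoC; simpl.
  rewrite <- sqrt_Rsqr_abs. apply sqrt_le_1_alt.
  pose proof (sin2_cos2 θ). pose proof (COS_bound θ). unfold Rsqr in *. nra.
Qed.

Lemma exp_le_2_Rabs_1_minus_exp (a : R) : 1 <= Rabs a -> exp a <= 2 * Rabs (1 - exp a).
Proof.
  intros Ha. destruct (Rle_or_lt 0 a) as [Hp|Hn].
  - rewrite Rabs_pos_eq in Ha by lra.
    pose proof (exp_ineq1 a ltac:(lra)). rewrite Rabs_left; lra.
  - rewrite Rabs_left in Ha by lra.
    assert (Hinv : exp a * exp (- a) = 1) by (rewrite <- exp_plus, Rplus_opp_r; apply exp_0).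
    pose proof (exp_ineq1 (- a) ltac:(lra)). pose proof (exp_pos a).
    assert (exp a < 1/2) by nra.
    rewrite Rabs_pos_eq; lra.
Qed.

(* [|g|^2 = e^{2π t1} / |1 - e^{2π t}|]. *)
Lemma Cmod_g_lem_le (t1 t2 : R) : 1 <= Rabs t1 -> Cmod (g_lem (t1, t2)) <= 2.
Proof.
  intros Ht. pose proof PI_RGT_0 as HPI. unfold g_lem. rewrite Cmod_Cexp.
  replace (Cexp (Cmult (RtoC (2 * PI)) (t1, t2)))
    with ((exp (2 * PI * t1) * cos (2 * PI * t2), exp (2 * PI * t1) * sin (2 * PI * t2)) : C)
    by (unfold Cexp, Cmult, RtoC; simpl; f_equal; apply f_equal2; apply f_equal; ring).
  set (E := exp (2 * PI * t1)).
  set (W := Cminus 1 (E * cos (2 * PI * t2), E * sin (2 * PI * t2))).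
  replace (Re (Cminus (Cmult (RtoC PI) (t1, t2)) (Cmult (RtoC (1 / 2)) (Clog W))))
    with (PI * t1 - 1/2 * ln (Cmod W))
    by (unfold Cminus, Cmult, Cplus, Copp, RtoC, Clog; simpl; ring).
  assert (HE : E <= 2 * Rabs (1 - E)).
  { apply exp_le_2_Rabs_1_minus_exp. rewrite Rabs_mult, (Rabs_pos_eq (2 * PI)) by lra.
    pose proof PI2_1. nra. }
  assert (HEpos : 0 < E) by apply exp_pos.
  assert (HW : Rabs (1 - E) <= Cmod W) by (apply Rabs_1_minus_le_Cmod; lra).
  assert (Hsq : exp (PI * t1 - 1/2 * ln (Cmod W)) * exp (PI * t1 - 1/2 * ln (Cmod W))
                = E / Cmod W).
  { rewrite <- exp_plus.
    replace (PI * t1 - 1 / 2 * ln (Cmod W) + (PI * t1 - 1 / 2 * ln (Cmod W)))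
      with (2 * PI * t1 + - ln (Cmod W)) by field.
    rewrite exp_plus, exp_Ropp, exp_ln by lra. fold E. field. lra. }
  assert (E / Cmod W <= 2).
  { apply (Rmult_le_reg_r (Cmod W)); [lra|]. field_simplify; lra. }
  pose proof (exp_pos (PI * t1 - 1 / 2 * ln (Cmod W))). nra.
Qed.

Theorem lemma4p2 (zeta : R) (omega : C) :
  0 < Im omega < 1/2 ->
  exists (Cc c T b0 : R), 0 < Cc /\ 0 < c /\ 0 < b0 /\
    forall (t1 t2 b : R),
      T < Rabs t1 -> -(1/2) < t2 < 0 -> 0 < b < b0 ->
      Cmod (Cmult (Cexp (Cdiv (f_lem zeta omega (t1, t2)) (RtoC (b ^ 2))))
                  (g_lem (t1, t2)))
        <= Cc * exp (- (c / b ^ 2) * Rabs t1).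
Proof.
  destruct omega as [w1 w2]. intros Hw2. pose proof PI_RGT_0.
  pose proof (Re_f_lem_linear_decay zeta w1 w2) as Hdecay.
  set (k := PI * Rmin (2 * w2) (1 - 2 * w2)) in Hdecay.
  set (M := PI * Rabs zeta + 10 + PI * Rabs w1) in Hdecay.
  assert (Hk : 0 < k) by (apply Rmult_lt_0_compat; [|apply Rmin_glb_lt]; simpl in Hw2; lra).
  assert (HM : 0 <= M) by (pose proof (Rabs_pos zeta); pose proof (Rabs_pos w1); unfold M; nra).
  exists 2, (k / 2), (Rmax 1 (2 * M / k)), 1.
  split; [lra|]. split; [lra|]. split; [lra|].
  intros t1 t2 b HT Ht2 Hb.
  pose proof (Rmax_l 1 (2 * M / k)). pose proof (Rmax_r 1 (2 * M / k)).
  assert (HMt : M <= k / 2 * Rabs t1).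
  { apply (Rmult_le_reg_r (2 / k)); [apply Rdiv_lt_0_compat; lra|].
    replace (k / 2 * Rabs t1 * (2 / k)) with (Rabs t1) by (field; lra).
    replace (M * (2 / k)) with (2 * M / k) by (field; lra). lra. }
  pose proof (Hdecay t1 t2 Hw2 Ht2) as Hf.
  assert (Hb2 : 0 < b ^ 2) by nra.
  rewrite Cmod_mult, Cmod_Cexp, Re_div_RtoC, Rmult_comm by lra.
  apply Rmult_le_compat; [apply Cmod_ge_0|left; apply exp_pos|apply Cmod_g_lem_le; lra|].
  apply exp_le_compat, Rle_div_l; [lra|].
  replace (- (k / 2 / b ^ 2) * Rabs t1 * b ^ 2) with (- (k / 2) * Rabs t1) by (field; lra).
  lra.
Qed.
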